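(* Let $T_1=(Q_1,\Sigma,\Delta,R_1,q_1^0)$ and $T_2=(Q_2,\Delta,\Omega,R_2,q_2^0)$ be top-down tree transducers, let $\hat{T}_1$ be the product construction of $T_1$ and the domain automaton of $T_2$, and let $M$ be the look-ahead transducer constructed from $T_1$ and $T_2$ as described in the context. Then the composition $\hat{T}_1\circ T_2$ (i.e., the relation $\mathcal{R}(\hat{T}_1)\circ\mathcal{R}(T_2)$) is functional if and only if $M$ is functional.
   Context: A top-down tree transducer $T=(Q,\Sigma,\Delta,R,q_0)$ has finite state set $Q$, ranked input/output alphabets $\Sigma,\Delta$, initial state $q_0$, and finite rule set $R$ of rules $q(a(x_1,\dots,x_k))\to t$ with $a\in\Sigma_k$ ($\Sigma_k$ = symbols of rank $k$) and $t$ a tree over $\Delta$ whose leaves may additionally be of the form $q'(x_i)$, $q'\in Q$, $i\in[k]$; rules are used as rewrite rules in the usual way. $\mathcal{R}(T)$ is the set of pairs $(s,t)$ with $t$ a tree over $\Delta$ derivable from $q_0(s)$; $\text{dom}(q)$ is the set of inputs $s$ such that some tree over $\Delta$ is derivable from $q(s)$. A relation is functional if it is a (partial) function; $\mathcal{R}_1\circ\mathcal{R}_2=\{(s,u)\mid\exists t:(s,t)\in\mathcal{R}_1,(t,u)\in\mathcal{R}_2\}$. For $q\in Q$, $a\in\Sigma_k$, $\text{rhs}_T(q,a)$ is the set of right-hand sides of rules with left-hand side $q(a(x_1,\dots,x_k))$; for a right-hand side $\xi$ (resp. a set $\Gamma$ of right-hand sides), $\xi[x_i]$ (resp. $\Gamma[x_i]$)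 is the set of states $q'$ such that $q'(x_i)$ occurs in $\xi$ (resp. in some tree of $\Gamma$). Domain automaton of $T$: the top-down tree automaton (transducer over $\Sigma$ with rules of the form $p(a(x_1,\dots,x_k))\to a(p_1(x_1),\dots,p_k(x_k))$) with states all subsets of $Q$, initial state $\{q_0\}$, rules $S(a(x_1,\dots,x_k))\to a(S_1(x_1),\dots,S_k(x_k))$ for every $a\in\Sigma_k$, nonempty $S=\{q_1,\dots,q_n\}\subseteq Q$ and nonempty $\Gamma_j\subseteq\text{rhs}_T(q_j,a)$ ($j\in[n]$), where $S_i=\bigcup_j\Gamma_j[x_i]$, and rules $\emptyset(a(x_1,\dots,x_k))\to a(\emptyset(x_1),\dots,\emptyset(x_k))$ for all $a$; for an automaton state $l$, $\text{dom}(l)$ is the set of trees accepted from $l$. Product construction of transducers $T=(Q,\Sigma,\Delta,R,q_0)$ and $T'=(Q',\Delta,\Omega,R',q'_0)$: the transducer with states $Q\times Q'$, initial state $(q_0,q'_0)$, and, for every rule $q(a(x_1,\dots,x_k))\to\xi$ of $T$, every $p\in Q'$ and every tree $\zeta$ derivable from $p(\xi)$ using rules of $T'$ in which the leaves of $\xi$ of the form $q''(x_i)$ are treated as unrewritable symbols and a state $p'$ applied to such a leaf stays as $p'(q''(x_i))$, the rule $(q,p)(a(x_1,\dots,x_k))\to\zeta'$ (said to be obtained from the rule $q(a(x_1,\dots,x_k))\to\xi$ by translating $\xi$ with $p$), where $\zeta'$ replaces each $p'(q''(x_i))$ by $(q'',p')(x_i)$. A top-down tree transducer with look-ahead is a tuple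 $(Q,\Sigma,\Delta,R,q_0,B)$ where $B$ is a top-down tree automaton over $\Sigma$ with state set $L$ and rules have the form $q(a(x_1\!:\!l_1,\dots,x_k\!:\!l_k))\to t$ with $l_i\in L$; on input $s$, each node $v$ with label $a\in\Sigma_k$ is first relabeled by $\langle a,l_1,\dots,l_k\rangle$ where $l_i\in L$ are such that the $i$-th subtree of $v$ is in $\text{dom}(l_i)$, and the relabeled tree is then processed reading each rule as $q(\langle a,l_1,\dots,l_k\rangle(x_1,\dots,x_k))\to t$; the relation consists of all pairs $(s,r)$ with $r$ obtainable this way. Construction of $M$: let $\hat{T}_1$ be the product construction of $T_1$ and the domain automaton of $T_2$ (states written $(q,S)$ with $q\in Q_1$, $S\subseteq Q_2$), and $N$ the product construction of $\hat{T}_1$ and $T_2$ (states written $(q,S,q')$). The states of $M$ are the $(q,S,q')$ with $q'\in S$; its initial state is $(q_1^0,\{q_2^0\},q_2^0)$; its look-ahead automaton is the domain automaton $\hat{A}$ of $\hat{T}_1$. For every rule $(q,S,q')(a(x_1,\dots,x_k))\to\gamma$ of $N$ involving only such states, obtained from the rule $(q,S)(a(x_1,\dots,x_k))\to\xi$ of $\hat{T}_1$ by translating $\xi$ with $q'$, and for all states $l_1,\dots,l_k$ of $\hat{A}$ with $\xi[x_i]\subseteq l_i$ ($i\in[k]$), $M$ has the rule $(q,S,q')(a(x_1\!:\!l_1,\dots,x_k\!:\!l_k))\to\gamma$. *)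

From mathcomp Require Import all_boot.
From Stdlib Require List.

Set Implicit Arguments.
Unset Strict Implicit.
Unset Printing Implicit Defensive.

Inductive tree (X : Type) : Type := Node : X -> seq (tree X) -> tree X.
Arguments Node {X}.

Fixpoint tmap (X Y : Type) (f : X -> Y) (t : tree X) : tree Y :=
  match t with Node x ts => Node (f x) (map (tmap f) ts) end.

Fixpoint ranked (X : Type) (rk : X -> nat) (t : tree X) : bool :=
  match t with Node x ts => (size ts == rk x) && all (ranked rk) ts end.

(* Right-hand sides: trees over D whose leaves may be q(x_i).  The leaf
   q(x_(i+1)) is encoded as [Node (inr (q, i)) [::]]  (0-based index i). *)
Notation rhs D Q := (tree (D + (Q * nat))%type).

Fixpoint calls (D Q : Type) (xi : rhs D Q) : seq (Q * nat) :=
  match xi with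
  | Node (inl _) xs => flatten (map (@calls D Q) xs)
  | Node (inr qi) _ => [:: qi]
  end.

(* rule sets as relations: R q a xi  <->  q(a(x_1,..,x_k)) -> xi is a rule *)
Definition ruleset (Q A D : Type) := Q -> A -> rhs D Q -> Prop.

(* Semantics.  Input trees may contain, besides symbols of A, "stuck"  *)
(* symbols v : V (unrewritable leaves; no rule applies to them): a     *)
(* state q applied to such a leaf stays as q(v), encoded as the leaf   *)
(* [Node (inr (q, v)) [::]] of the output.  trans R s q t  means that  *)
(* the (fully rewritten) tree t is derivable from q(s): a rule          *)
(* q(a(x_1..x_k)) -> xi is applied at the root and every occurrence of *)
(* q'(x_i) in xi is replaced (independently) by a tree derivable from  *)
(* q'(s_i).                                                            *)
Inductive inst (Q D W : Type) (P : Q -> nat -> tree (D + W) -> Prop)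
  : rhs D Q -> tree (D + W) -> Prop :=
| inst_out d xs ts :
    List.Forall2 (inst P) xs ts -> inst P (Node (inl d) xs) (Node (inl d) ts)
| inst_call q i t : P q i t -> inst P (Node (inr (q, i)) [::]) t.

Section Semantics.
Variables (Q A D V : Type) (R : ruleset Q A D).

Fixpoint trans (s : tree (A + V)) : Q -> tree (D + (Q * V)) -> Prop :=
  match s with
  | Node (inr v) _ => fun q t => t = Node (inr (q, v)) [::]
  | Node (inl a) ss =>
      let F := map trans ss in
      fun q t => exists2 xi, R q a xi &
        inst (fun q' i t' => exists2 f, List.nth_error F i = Some f & f q' t') xi t
  end.
End Semantics.

Definition plain (A : Type) (s : tree A) : tree (A + void) := tmap inl s.
Definition plain_out (D Q : Type) (t : tree D) : tree (D + (Q * void)) := tmap inl t.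

Definition trel (Q A D : Type) (rkA : A -> nat) (rkD : D -> nat)
    (R : ruleset Q A D) (q0 : Q) (s : tree A) (t : tree D) : Prop :=
  ranked rkA s /\ ranked rkD t /\ trans R (plain s) q0 (plain_out Q t).

Definition tdom (Q A D : Type) (rkA : A -> nat) (rkD : D -> nat)
    (R : ruleset Q A D) (q : Q) (s : tree A) : Prop :=
  ranked rkA s /\ exists t : tree D, ranked rkD t /\ trans R (plain s) q (plain_out Q t).

Record tdtt (Q : finType) (A D : Type) := TDTT {
  tt_rules : seq (Q * A * rhs D Q);
  tt_init : Q }.

Definition rules_of (Q : finType) (A D : Type) (T : tdtt Q A D) : ruleset Q A D :=
  fun q a xi => List.In (q, a, xi) (tt_rules T).

Fixpoint wf_rhs (Q D : Type) (rkD : D -> nat) (k : nat) (xi : rhs D Q) : bool :=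
  match xi with
  | Node (inl d) xs => (size xs == rkD d) && all (wf_rhs rkD k) xs
  | Node (inr (_, i)) xs => (size xs == 0) && (i < k)
  end.

Definition wf_tdtt (Q : finType) (A D : Type) (rkA : A -> nat) (rkD : D -> nat)
    (T : tdtt Q A D) : Prop :=
  forall q a xi, List.In (q, a, xi) (tt_rules T) -> wf_rhs rkD (rkA a) xi.

Definition functional (X Y : Type) (R : X -> Y -> Prop) : Prop :=
  forall x y z, R x y -> R x z -> y = z.

Definition rcomp (X Y Z : Type) (R1 : X -> Y -> Prop) (R2 : Y -> Z -> Prop) : X -> Z -> Prop :=
  fun x z => exists y, R1 x y /\ R2 y z.

(* Automata are transducers A -> A with rules                          *)
(*   p(a(x_1..x_k)) -> a(p_1(x_1),..,p_k(x_k)).                        *)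
Definition dom_aut_rule (Q : finType) (A D : Type) (rkA : A -> nat)
    (R : ruleset Q A D) : ruleset {set Q} A A :=
  fun S a xi => exists Sf : nat -> {set Q},
    xi = Node (inl a) (mkseq (fun i => Node (inr (Sf i, i)) [::]) (rkA a)) /\
    ( (S = set0 /\ forall i, i < rkA a -> Sf i = set0) \/
      (S != set0 /\
       exists G : Q -> rhs D Q -> Prop,
         (forall q, q \in S -> (exists xi', G q xi') /\ (forall xi', G q xi' -> R q a xi')) /\
         (forall i, i < rkA a -> forall q',
             q' \in Sf i <-> exists q, q \in S /\ exists xi', G q xi' /\ List.In (q', i) (calls xi')))).

Definition prod_lab (Q Q' O : Type) (l : O + (Q' * (Q * nat))) : O + ((Q * Q') * nat) :=
  match l with
  | inl o => inl o
  | inr (p', (q'', i)) => inr ((q'', p'), i)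
  end.

Definition translates (Q Q' D O : Type) (R' : ruleset Q' D O) (p : Q')
    (xi : rhs D Q) (z : rhs O (Q * Q')) : Prop :=
  exists2 zeta, trans R' xi p zeta & z = tmap (@prod_lab Q Q' O) zeta.

Definition prod_rule (Q Q' A D O : Type) (R : ruleset Q A D) (R' : ruleset Q' D O)
  : ruleset (Q * Q') A O :=
  fun qp a z => exists2 xi, R qp.1 a xi & translates R' qp.2 xi z.

(* R : rules over the relabeled alphabet A * seq L  (<a,l_1..l_k>),    *)
(* B : rules of the look-ahead automaton (states L).                   *)
Inductive relab (A L : Type) (Dm : L -> tree A -> Prop) : tree A -> tree (A * seq L) -> Prop :=
| relab_node a ss ls ss' :
    List.Forall2 Dm ls ss -> List.Forall2 (relab Dm) ss ss' ->
    relab Dm (Node a ss) (Node (a, ls) ss').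

Definition la_rel (Q L A D : Type) (rkA : A -> nat) (rkD : D -> nat)
    (R : ruleset Q (A * seq L) D) (q0 : Q) (B : ruleset L A A)
    (s : tree A) (r : tree D) : Prop :=
  ranked rkA s /\ ranked rkD r /\
  exists s', relab (tdom rkA rkA B) s s' /\ trans R (plain s') q0 (plain_out Q r).

Section Construction.
Variables (Q1 Q2 : finType) (Sig Del Om : Type)
  (rkS : Sig -> nat) (rkD : Del -> nat) (rkO : Om -> nat)
  (T1 : tdtt Q1 Sig Del) (T2 : tdtt Q2 Del Om).

Definition hatT1_rules : ruleset (Q1 * {set Q2}) Sig Del :=
  prod_rule (rules_of T1) (dom_aut_rule rkD (rules_of T2)).
Definition hatT1_init : Q1 * {set Q2} := (tt_init T1, [set tt_init T2]).
Definition hatT1_rel := trel rkS rkD hatT1_rules hatT1_init.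

Definition Mstate := {x : Q1 * {set Q2} * Q2 | x.2 \in x.1.2}.
Definition Mlab (l : Om + (Mstate * nat)) : Om + ((Q1 * {set Q2} * Q2) * nat) :=
  match l with inl o => inl o | inr (p, i) => inr (val p, i) end.

Definition Mla := dom_aut_rule rkS hatT1_rules.

Definition M_rules : ruleset Mstate (Sig * seq {set (Q1 * {set Q2})}) Om :=
  fun st al g =>
    exists2 xi, hatT1_rules (val st).1 al.1 xi &
      translates (rules_of T2) (val st).2 xi (tmap Mlab g) /\
      size al.2 = rkS al.1 /\
      (forall i, i < rkS al.1 -> forall q'', List.In (q'', i) (calls xi) ->
          q'' \in nth set0 al.2 i).

Definition M_init : Mstate :=
  exist _ (tt_init T1, [set tt_init T2], tt_init T2) (set11 (tt_init T2)).

Definition M_rel := la_rel rkS rkO M_rules M_init Mla.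
End Construction.

From mathcomp Require Import all_boot boolp.

(* R(hat T1) o R(T2) is always contained in R(M): label every node by the set of
   hat T1-states whose domain contains its subtree (a look-ahead accepted by M) and
   read off, rule by rule, a run of M from a run of hat T1 followed by a run of T2.
   Conversely, a run of M is such a pair of runs except that the calls of T2 at one
   node of the intermediate tree may be served by different translations of that
   node.  This is harmless when the composition is functional, because functionality
   at the root descends to every pair (hat T1-state, T2-state) called below: two
   distinct outputs there could be grafted into two complete composed runs with
   distinct outputs, all other calls being completed thanks to the look-ahead and to
   the set of T2-states recorded in each hat T1-state. *)

Lemma tree_ind_in (X : Type) (P : tree X -> Prop) :
  (forall x ts, (forall t, List.In t ts -> P t) -> P (Node x ts)) -> forall t, P t.
Proof.
move=> H; fix IH 1 => -[x ts]; apply: H.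
elim: ts => [|t ts IHts] s /=; first by case.
by case=> [<-|]; [apply: IH | apply: IHts].
Qed.

Lemma nth_error_size {T} {xs : seq T} {j x} : List.nth_error xs j = Some x -> j < size xs.
Proof. by elim: xs j => [|y xs IH] [|j] //= /IH. Qed.

Lemma nth_error_defined {T} {xs : seq T} {j} : j < size xs -> exists x, List.nth_error xs j = Some x.
Proof. elim: xs j => [|y xs IH] [|j] //=; [by exists y | exact: IH]. Qed.

Lemma nth_error_nth {T} {xs : seq T} {j x} d : List.nth_error xs j = Some x -> nth d xs j = x.
Proof. by elim: xs j => [|y xs IH] [|j] //= ; [case | exact: IH]. Qed.

Section SeqFacts.
Context {X Y Z : Type}.
Implicit Types (xs : seq X) (ys : seq Y).

Lemma nth_error_map (f : X -> Y) xs j :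
  List.nth_error (map f xs) j = omap f (List.nth_error xs j).
Proof. by elim: xs j => [|y xs IH] [|j] //=. Qed.

Lemma eq_map_In (f g : X -> Y) xs :
  (forall x, List.In x xs -> f x = g x) -> map f xs = map g xs.
Proof.
elim: xs => //= x xs IH H; rewrite H ?IH //; last by left.
by move=> x' h; apply: H; right.
Qed.

Lemma In_flatten_map (f : X -> seq Y) y xs :
  List.In y (flatten (map f xs)) <-> exists2 x, List.In x xs & List.In y (f x).
Proof.
have In_cat (s1 s2 : seq Y) : List.In y (s1 ++ s2) <-> List.In y s1 \/ List.In y s2.
  by elim: s1 => /= [|z s IH]; [tauto | rewrite IH; tauto].
elim: xs => /= [|x xs IH]; first by split => // -[].
rewrite In_cat IH; split.
- by case=> [h|[x' h1 h2]]; [exists x; [left|] | exists x'; [right|]].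
- by case=> x' [<-|h1] h2; [left | right; exists x'].
Qed.

Lemma In_map (f : X -> Y) y xs :
  List.In y (map f xs) <-> exists2 x, List.In x xs & y = f x.
Proof.
elim: xs => /= [|x xs IH]; first by split => // -[].
rewrite IH; split.
- by case=> [<-|[x' h1 h2]]; [exists x; [left|] | exists x'; [right|]].
- by case=> x' [<-|h1] ->; [left | right; exists x'].
Qed.

Lemma allP_In (p : pred X) xs : reflect (forall x, List.In x xs -> p x) (all p xs).
Proof.
elim: xs => [|y xs IH] /=; first by left.
apply: (iffP andP) => [[py /IH pxs] x [<-|/pxs] // | H].
by split; [apply: H; left | apply/IH => x h; apply: H; right].
Qed.

Lemma In_iota_lt i n : List.In i (iota 0 n) -> i < n.
Proof.
elim: n i => [|n IH] i //; rewrite -addn1 iotaD List.in_app_iff /=.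
by case=> [/IH /ltn_addr //|[<-|//]]; rewrite add0n addn1.
Qed.

Lemma seq_from_nth (R : nat -> Y -> Prop) n :
  (forall j, j < n -> exists y, R j y) ->
  exists ys, size ys = n /\ forall j y, List.nth_error ys j = Some y -> R j y.
Proof.
elim: n R => [|n IH] R H; first by exists [::]; split=> // -[].
have [y0 Hy0] := H 0 isT.
have [ys [Hs Hys]] := IH (fun j => R j.+1) (fun j hj => H j.+1 hj).
exists (y0 :: ys); split; first by rewrite /= Hs.
by move=> [|j] y /=; [case=> <- | exact: Hys].
Qed.

Lemma seq_from_nth_error (R : nat -> X -> Y -> Prop) xs :
  (forall j x, List.nth_error xs j = Some x -> exists y, R j x y) ->
  exists ys, size ys = size xs /\
    forall j x y, List.nth_error xs j = Some x -> List.nth_error ys j = Some y -> R j x y.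
Proof.
move=> H.
have [ys [Hs Hys]] : exists ys, size ys = size xs /\ forall j y,
    List.nth_error ys j = Some y -> forall x, List.nth_error xs j = Some x -> R j x y.
  apply: seq_from_nth => j hj; have [x hx] := nth_error_defined hj; have [y hy] := H _ _ hx.
  by exists y => x'; rewrite hx => -[<-].
by exists ys; split => // j x y hx /Hys; apply.
Qed.

Lemma Forall2_nthP (R : X -> Y -> Prop) xs ys :
  List.Forall2 R xs ys <-> size xs = size ys /\
    forall j x y, List.nth_error xs j = Some x -> List.nth_error ys j = Some y -> R x y.
Proof.
split.
- elim=> [|x y xs' ys' Hxy _ [IHs IH]] /=; first by split=> // -[].
  split; first by rewrite IHs.
  by move=> [|j] x' y' /= ; [move=> [<-] [<-] | exact: IH].
- elim: xs ys => [|x xs IH] [|y ys] /= [Hs Hn]; try discriminate; first by constructor.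
  constructor; first exact: (Hn 0).
  apply: IH; split; [by case: Hs | move=> j; exact: (Hn j.+1)].
Qed.

Lemma Forall2_size {R : X -> Y -> Prop} {xs ys} : List.Forall2 R xs ys -> size xs = size ys.
Proof. by move/Forall2_nthP => []. Qed.

Lemma Forall2_nth {R : X -> Y -> Prop} {xs ys j x y} : List.Forall2 R xs ys ->
  List.nth_error xs j = Some x -> List.nth_error ys j = Some y -> R x y.
Proof. by move/Forall2_nthP => [_ H]; apply: H. Qed.

Lemma Forall2_nth_l {R : X -> Y -> Prop} {xs ys j x} : List.Forall2 R xs ys ->
  List.nth_error xs j = Some x -> exists2 y, List.nth_error ys j = Some y & R x y.
Proof.
move=> F hx; have := nth_error_size hx; rewrite (Forall2_size F) => /nth_error_defined [y hy].
by exists y => //; exact: Forall2_nth F hx hy.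
Qed.

Lemma Forall2_nth_r {R : X -> Y -> Prop} {xs ys j y} : List.Forall2 R xs ys ->
  List.nth_error ys j = Some y -> exists2 x, List.nth_error xs j = Some x & R x y.
Proof.
move=> F hy; have := nth_error_size hy; rewrite -(Forall2_size F) => /nth_error_defined [x hx].
by exists x => //; exact: Forall2_nth F hx hy.
Qed.

Lemma Forall2_map_l (R : Z -> Y -> Prop) (f : X -> Z) xs ys :
  List.Forall2 R (map f xs) ys <-> List.Forall2 (fun x y => R (f x) y) xs ys.
Proof.
split; last by elim=> //= *; constructor.
by elim: xs ys => [|x xs IH] ys H; inversion H; subst; constructor; auto.
Qed.

Lemma Forall2_map_r (R : X -> Z -> Prop) (f : Y -> Z) xs ys :
  List.Forall2 R xs (map f ys) <-> List.Forall2 (fun x y => R x (f y)) xs ys.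
Proof.
split; last by elim=> //= *; constructor.
by elim: ys xs => [|y ys IH] xs H; inversion H; subst; constructor; auto.
Qed.

Lemma Forall2_impl_In (R R' : X -> Y -> Prop) xs ys :
  (forall x y, List.In x xs -> R x y -> R' x y) -> List.Forall2 R xs ys -> List.Forall2 R' xs ys.
Proof.
move=> H F; elim: F H => [|x y xs' ys' Hr _ IH] H; constructor.
- by apply: H => //; left.
- by apply: IH => x' y' h; apply: H; right.
Qed.

Lemma Forall2_refl_In (R : X -> X -> Prop) xs :
  (forall x, List.In x xs -> R x x) -> List.Forall2 R xs xs.
Proof.
elim: xs => [|x xs IH] H; constructor; first by apply: H; left.
by apply: IH => y h; apply: H; right.
Qed.

Lemma Forall2_eq_map {f : Y -> X} {xs ys} :
  List.Forall2 (fun x y => x = f y) xs ys -> xs = map f ys.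
Proof. by elim=> //= x y xs' ys' -> _ ->. Qed.

Lemma Forall2_total (R : X -> Y -> Prop) xs :
  (forall x, List.In x xs -> exists y, R x y) -> exists ys, List.Forall2 R xs ys.
Proof.
elim: xs => [|x xs IH] H; first by exists [::].
have [y hy] := H x (or_introl erefl).
have [ys hys] := IH (fun x' h => H x' (or_intror h)).
by exists (y :: ys); constructor.
Qed.

Lemma Forall2_compose {R1 : X -> Y -> Prop} {R2 : Y -> Z -> Prop} {xs ys zs} :
  List.Forall2 R1 xs ys -> List.Forall2 R2 ys zs ->
  List.Forall2 (fun x z => exists2 y, R1 x y & R2 y z) xs zs.
Proof.
move=> F; elim: F zs => [|x y xs' ys' h1 _ IH] zs F2; inversion F2; subst; constructor.
- by exists y.
- exact: IH.
Qed.

Lemma Forall2_decompose {R1 : X -> Y -> Prop} {R2 : Y -> Z -> Prop} {xs zs} :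
  List.Forall2 (fun x z => exists2 y, R1 x y & R2 y z) xs zs ->
  exists ys, List.Forall2 R1 xs ys /\ List.Forall2 R2 ys zs.
Proof.
elim=> [|x z xs' zs' [y h1 h2] _ [ys [H1 H2]]]; first by exists [::].
by exists (y :: ys); split; constructor.
Qed.

End SeqFacts.

Lemma tmap_ext {X Y} (f g : X -> Y) t : f =1 g -> tmap f t = tmap g t.
Proof.
by move=> fg; elim/tree_ind_in: t => x ts IH /=; rewrite fg; congr Node; apply: eq_map_In.
Qed.

Lemma Forall2_iota {Y} (R : nat -> Y -> Prop) n ys :
  List.Forall2 R (iota 0 n) ys <-> size ys = n /\
     forall j y, List.nth_error ys j = Some y -> R j y.
Proof.
have nth_error_iota j : List.nth_error (iota 0 n) j = if j < n then Some j else None.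
  rewrite -[j in Some j]add0n; elim: n 0 j => [|n IH] m [|j] //=; first by rewrite addn0.
  by rewrite IH addSnnS.
rewrite Forall2_nthP size_iota; split => -[Hs H]; split => //.
- move=> j y hy; have hj : j < n by rewrite Hs; exact: nth_error_size hy.
  by apply: (H j) hy; rewrite nth_error_iota hj.
- by move=> j x y; rewrite nth_error_iota; case: ifP => // _ [<-]; exact: H.
Qed.

(** * Instantiating right-hand sides *)

(* [inst] for outputs without stuck leaves; see [inst_plain_outE]. *)
Inductive pinst (Q D : Type) (P : Q -> nat -> tree D -> Prop) : rhs D Q -> tree D -> Prop :=
| pinst_out d xs ts : List.Forall2 (pinst Q D P) xs ts -> pinst Q D P (Node (inl d) xs) (Node d ts)
| pinst_call q i t : P q i t -> pinst Q D P (Node (inr (q, i)) [::]) t.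
Arguments pinst {Q D}.
Arguments pinst_out {Q D P}.
Arguments pinst_call {Q D P}.

Section Instantiation.
Context {Q D : Type}.
Implicit Types (P : Q -> nat -> tree D -> Prop) (xi : rhs D Q).

Definition pinst_spec P xi (t : tree D) : Prop :=
  match xi with
  | Node (inl d) xs => exists2 ts, t = Node d ts & List.Forall2 (pinst P) xs ts
  | Node (inr (q, i)) xs => xs = [::] /\ P q i t
  end.

Lemma pinst_inv {P xi t} : pinst P xi t -> pinst_spec P xi t.
Proof. by case=> [d xs ts H | q i t' H] /=; [exists ts | ]. Qed.

Lemma pinst_mono_calls P P' xi t :
  (forall q i t', List.In (q, i) (calls xi) -> P q i t' -> P' q i t') ->
  pinst P xi t -> pinst P' xi t.
Proof.
elim/tree_ind_in: xi t => x xs IH t; case: x => [d|[q i]] H /pinst_inv.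
- move=> [ts -> F]; constructor; move: F; apply: Forall2_impl_In => x y hx.
  by apply: IH => // q i t' hc; apply: H; rewrite /= In_flatten_map; exists x.
- by move=> [-> h]; constructor; apply: H => //=; left.
Qed.

Lemma pinst_mono P P' xi t :
  (forall q i t', P q i t' -> P' q i t') -> pinst P xi t -> pinst P' xi t.
Proof. by move=> H; apply: pinst_mono_calls => q i t' _; apply: H. Qed.

Lemma pinst_and {P P' xi t} :
  pinst P xi t -> pinst P' xi t -> pinst (fun q i t' => P q i t' /\ P' q i t') xi t.
Proof.
elim/tree_ind_in: xi t => x xs IH t; case: x => [d|[q i]] /pinst_inv.
- move=> [ts -> F] /pinst_inv [ts' [<-] F']; constructor.
  apply/Forall2_nthP; split; first exact: Forall2_size F.
  move=> j x y hx hy; apply: IH; first exact: List.nth_error_In hx.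
  + exact: Forall2_nth F hx hy.
  + exact: Forall2_nth F' hx hy.
- by move=> [-> h] /pinst_inv [_ h']; constructor.
Qed.

Lemma pinst_call_inv {P xi t q i} :
  pinst P xi t -> List.In (q, i) (calls xi) -> exists t', P q i t'.
Proof.
elim/tree_ind_in: xi t => x xs IH t; case: x => [d|[q' i']] /pinst_inv.
- move=> [ts _ F] /= /In_flatten_map [x hx hc].
  have [j hj] := List.In_nth_error _ _ hx; have [y _ hy] := Forall2_nth_l F hj.
  exact: IH x hx y hy hc.
- by move=> [-> h] /= [[<- <-]|[]]; exists t.
Qed.

Lemma pinst_ranked {rk : D -> nat} {k P xi t} :
  wf_rhs rk k xi -> pinst P xi t -> (forall q i t', P q i t' -> ranked rk t') -> ranked rk t.
Proof.
elim/tree_ind_in: xi t => x xs IH t; case: x => [d|[q i]] /= hw /pinst_inv.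
- move=> [ts -> F] H /=; case/andP: hw => /eqP hs /allP_In hall.
  rewrite -(Forall2_size F) hs eqxx /=; apply/allP_In => y hy.
  have [j hj] := List.In_nth_error _ _ hy; have [x hx hxy] := Forall2_nth_r F hj.
  have hxi := List.nth_error_In _ _ hx.
  exact: IH x hxi y (hall x hxi) hxy H.
- by move=> [_ h] H; exact: H h.
Qed.

End Instantiation.

Fixpoint leafy (D W : Type) (t : tree (D + W)) : bool :=
  match t with Node (inl _) ts => all (leafy D W) ts | Node (inr _) ts => nilp ts end.
Arguments leafy {D W}.

Fixpoint leaves (D W : Type) (t : tree (D + W)) : seq W :=
  match t with Node (inl _) ts => flatten (map (leaves D W) ts) | Node (inr w) _ => [:: w] end.
Arguments leaves {D W}.

Lemma calls_leaves {D Q} (xi : rhs D Q) : calls xi = leaves xi.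
Proof.
by elim/tree_ind_in: xi => -[d|w] xs IH //=; congr flatten; apply: eq_map_In.
Qed.

Section TmapLeaves.
Context {D D' W W' : Type} (f : D + W -> D' + W') (fd : D -> D') (fw : W -> W').
Hypotheses (f_inl : forall d, f (inl d) = inl (fd d)) (f_inr : forall w, f (inr w) = inr (fw w)).

Lemma leaves_tmap t : leaves (tmap f t) = map fw (leaves t).
Proof.
elim/tree_ind_in: t => -[d|w] ts IH /=; rewrite ?f_inl ?f_inr //= map_flatten -!map_comp.
by congr flatten; apply: eq_map_In.
Qed.

Lemma leafy_tmap t : leafy (tmap f t) = leafy t.
Proof.
elim/tree_ind_in: t => -[d|w] ts IH /=; rewrite ?f_inl ?f_inr //=; last by case: ts {IH}.
rewrite all_map; elim: ts IH => //= t ts IHts IH; rewrite IH; last by left.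
by rewrite IHts // => t' h; apply: IH; right.
Qed.

End TmapLeaves.

Lemma wf_rhs_leafy {D Q rk k} {xi : rhs D Q} : wf_rhs rk k xi -> leafy xi.
Proof.
elim/tree_ind_in: xi => -[d|[q i]] xs IH /=; last by case/andP.
by case/andP=> _ /allP_In h; apply/allP_In => x hx; apply: IH (h x hx).
Qed.

Lemma wf_rhs_call_lt {D Q rk k} {xi : rhs D Q} {q i} :
  wf_rhs rk k xi -> List.In (q, i) (calls xi) -> i < k.
Proof.
elim/tree_ind_in: xi => -[d|[q' i']] xs IH /=; last by case/andP=> _ h [[_ <-]|[]].
by case/andP=> _ /allP_In h /In_flatten_map [x hx hc]; exact: IH x hx (h x hx) hc.
Qed.

Lemma pinst_exists {Q D} (P : Q -> nat -> tree D -> Prop) (xi : rhs D Q) :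
  leafy xi -> (forall q i, List.In (q, i) (calls xi) -> exists t, P q i t) ->
  exists t, pinst P xi t.
Proof.
elim/tree_ind_in: xi => x xs IH; case: x => [d|[q i]] /= hl H.
- have [ts F] : exists ts, List.Forall2 (pinst P) xs ts.
    apply: Forall2_total => x hx; apply: IH => //; first exact: (allP_In _ _ hl).
    by move=> q i hc; apply: H; rewrite In_flatten_map; exists x.
  by exists (Node d ts); constructor.
- case: xs IH H hl => [|y l] _ H hl //.
  by have [t ht] := H q i (or_introl erefl); exists t; constructor.
Qed.

Definition inst_spec {Q D W} (P : Q -> nat -> tree (D + W) -> Prop) (xi : rhs D Q)
  (t : tree (D + W)) : Prop :=
  match xi with
  | Node (inl d) xs => exists2 ts, t = Node (inl d) ts & List.Forall2 (inst P) xs ts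
  | Node (inr (q, i)) xs => xs = [::] /\ P q i t
  end.

Lemma inst_inv {Q D W} {P : Q -> nat -> tree (D + W) -> Prop} {xi t} :
  inst P xi t -> inst_spec P xi t.
Proof. by case=> [d xs ts H | q i t' H] /=; [exists ts | ]. Qed.

Lemma inst_plain_outE {Q D W} (P : Q -> nat -> tree (D + (W * void)) -> Prop) xi t :
  inst P xi (plain_out W t) <-> pinst (fun q i t' => P q i (plain_out W t')) xi t.
Proof.
elim/tree_ind_in: xi t => x xs IH t; case: x => [d|[q i]]; split.
- move/inst_inv => [ts E H]; case: t E => d' ts' /= [Ed Ets]; subst d' ts.
  constructor; move/Forall2_map_r: H; apply: Forall2_impl_In => x y hx h; exact/(IH x hx y).
- move/pinst_inv => [ts -> H]; rewrite /plain_out /=; constructor; apply/Forall2_map_r.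
  by move: H; apply: Forall2_impl_In => x y hx h; exact/(IH x hx y).
- by move/inst_inv => [-> h]; constructor.
- by move/pinst_inv => [-> h]; constructor.
Qed.

Lemma inst_leaves {Q D W} {P : Q -> nat -> tree (D + W) -> Prop} {xi g w} :
  inst P xi g -> List.In w (leaves g) -> exists q i g', P q i g' /\ List.In w (leaves g').
Proof.
elim/tree_ind_in: xi g => x xs IH g; case: x => [d|[q i]] /inst_inv.
- move=> [gs -> F] /= /In_flatten_map [g' hg hw].
  have [j hj] := List.In_nth_error _ _ hg; have [x hx hxg] := Forall2_nth_r F hj.
  exact: IH x (List.nth_error_In _ _ hx) g' hxg hw.
- by move=> [_ h] hw; exists q, i, g.
Qed.

Lemma inst_leafy {Q D W} {P : Q -> nat -> tree (D + W) -> Prop} {xi g} :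
  inst P xi g -> (forall q i g', P q i g' -> leafy g') -> leafy g.
Proof.
elim/tree_ind_in: xi g => x xs IH g; case: x => [d|[q i]] /inst_inv.
- move=> [gs -> F] H /=; apply/allP_In => g' hg.
  have [j hj] := List.In_nth_error _ _ hg; have [x hx hxg] := Forall2_nth_r F hj.
  exact: IH x (List.nth_error_In _ _ hx) g' hxg H.
- by move=> [_ h] H; exact: H h.
Qed.

Section Runs.
Context {Q A D : Type} (R : ruleset Q A D).

Lemma trans_leafy {V} (s : tree (A + V)) q g : trans R s q g -> leafy g.
Proof.
elim/tree_ind_in: s q g => -[a|v] ss IH q g /=; last by move=> ->.
move=> [xi _ h]; move/inst_leafy: h; apply => q' i g' [f].
rewrite nth_error_map; case E: (List.nth_error ss i) => [si|] //= [<-].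
exact: IH (List.nth_error_In _ _ E) q' g'.
Qed.

Lemma trans_leaves {V} {s : tree (A + V)} {q g q' v} :
  trans R s q g -> List.In (q', v) (leaves g) -> List.In v (leaves s).
Proof.
elim/tree_ind_in: s q g => -[a|v'] ss IH q g /=; last by move=> -> /= [[_ <-]|[]]; left.
move=> [xi _ h] /(inst_leaves h) [q1 [i [g' [[f]]]]].
rewrite nth_error_map; case E: (List.nth_error ss i) => [si|] //= [<-] ht hw.
have hsi := List.nth_error_In _ _ E.
by rewrite In_flatten_map; exists si => //; exact: IH hsi q1 g' ht hw.
Qed.

Definition ptrans (s : tree A) (q : Q) (t : tree D) : Prop :=
  trans R (plain s) q (plain_out Q t).

Definition child_run (ss : seq (tree A)) (q : Q) (i : nat) (t : tree D) : Prop :=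
  exists2 si, List.nth_error ss i = Some si & ptrans si q t.

Lemma ptrans_node a ss q t :
  ptrans (Node a ss) q t <-> exists2 xi, R q a xi & pinst (child_run ss) xi t.
Proof.
rewrite /ptrans /plain /=; split => -[xi h1 h2]; exists xi => //.
- move/inst_plain_outE: h2; apply: pinst_mono => q' i t' [f]; rewrite !nth_error_map.
  by case E: (List.nth_error ss i) => [si|] //= [<-] h; exists si.
- apply/inst_plain_outE; move: h2; apply: pinst_mono => q' i t' [si hsi h].
  by exists (trans R (tmap inl si)) => //; rewrite !nth_error_map hsi.
Qed.

Lemma ptrans_ranked (rkA : A -> nat) (rkD : D -> nat) :
  (forall q a xi, R q a xi -> wf_rhs rkD (rkA a) xi) ->
  forall s q t, ptrans s q t -> ranked rkD t.
Proof.
move=> Hw s; elim/tree_ind_in: s => a ss IH q t /ptrans_node [xi hR hp].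
apply: (pinst_ranked (Hw _ _ _ hR) hp) => q' i t' [si hsi ht].
exact: IH (List.nth_error_In _ _ hsi) _ _ ht.
Qed.

End Runs.

Section SplitMerge.
Context {Q D W Y : Type} (f : D + W -> D + (Y * nat)) (f_inl : forall d, f (inl d) = inl d).
Context (P : Q -> nat -> tree (D + W) -> Prop) (P' : Y -> nat -> tree D -> Prop).

Lemma pinst_tmap_split xi g u :
  inst P xi g -> pinst P' (tmap f g) u ->
  pinst (fun q i u' => exists2 g', P q i g' & pinst P' (tmap f g') u') xi u.
Proof.
elim/tree_ind_in: xi g u => x xs IH g u; case: x => [d|[q i]] /inst_inv.
- move=> [gs -> F]; rewrite /= f_inl => /pinst_inv [us -> F']; constructor.
  move/Forall2_map_l: F' => F'; have := Forall2_compose F F'.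
  by apply: Forall2_impl_In => x y hx [g' h1 h2]; exact: IH h1 h2.
- by move=> [-> h] hq; constructor; exists g.
Qed.

Lemma pinst_tmap_merge xi u :
  pinst (fun q i u' => exists2 g', P q i g' & pinst P' (tmap f g') u') xi u ->
  exists g, inst P xi g /\ pinst P' (tmap f g) u.
Proof.
elim/tree_ind_in: xi u => x xs IH u; case: x => [d|[q i]] /pinst_inv.
- move=> [us -> F].
  have F' : List.Forall2 (fun x u => exists2 g, inst P x g & pinst P' (tmap f g) u) xs us.
    by move: F; apply: Forall2_impl_In => x y hx /(IH x hx) [g [h1 h2]]; exists g.
  have [gs [F1 F2]] := Forall2_decompose F'.
  exists (Node (inl d) gs); split; first by constructor.
  by rewrite /= f_inl; constructor; apply/Forall2_map_l.
- by move=> [-> [g h1 h2]]; exists g; split => //; constructor.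
Qed.

End SplitMerge.

(** * Domain automata *)

Definition aut_rhs {Q A : Type} (Sf : nat -> Q) (a : A) (n : nat) : rhs A Q :=
  Node (inl a) (mkseq (fun i => Node (inr (Sf i, i)) [::]) n).

Lemma inst_aut_rhsP {A Q W} (P : Q -> nat -> tree (A + W) -> Prop) Sf a n t :
  inst P (aut_rhs Sf a n) t <->
  exists2 ts, t = Node (inl a) ts &
    size ts = n /\ forall j y, List.nth_error ts j = Some y -> P (Sf j) j y.
Proof.
split.
- move/inst_inv => [ts -> /Forall2_map_l F]; exists ts => //.
  apply/(Forall2_iota (fun j y => P (Sf j) j y)).
  by move: F; apply: Forall2_impl_In => x y _ /inst_inv [].
- move=> [ts -> /(Forall2_iota (fun j y => P (Sf j) j y)) F]; constructor; apply/Forall2_map_l.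
  by move: F; apply: Forall2_impl_In => x y _ h; constructor.
Qed.

Lemma pinst_aut_rhsP {A Q} (P : Q -> nat -> tree A -> Prop) Sf a n t :
  pinst P (aut_rhs Sf a n) t <->
  exists2 ts, t = Node a ts &
    size ts = n /\ forall j y, List.nth_error ts j = Some y -> P (Sf j) j y.
Proof.
split.
- move/pinst_inv => [ts -> /Forall2_map_l F]; exists ts => //.
  apply/(Forall2_iota (fun j y => P (Sf j) j y)).
  by move: F; apply: Forall2_impl_In => x y _ /pinst_inv [].
- move=> [ts -> /(Forall2_iota (fun j y => P (Sf j) j y)) F]; constructor; apply/Forall2_map_l.
  by move: F; apply: Forall2_impl_In => x y _ h; constructor.
Qed.

Lemma wf_aut_rhs {A Q} (rk : A -> nat) (Sf : nat -> Q) a : wf_rhs rk (rk a) (aut_rhs Sf a (rk a)).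
Proof.
rewrite /= size_mkseq eqxx /=; apply/allP_In => y /In_map [i hi ->] /=.
exact: In_iota_lt hi.
Qed.

Lemma pinst_aut_rhs_exists {Q A B} (R' : ruleset Q A B) (Sf : nat -> Q) a ss n :
  size ss = n ->
  (forall j sj, List.nth_error ss j = Some sj -> exists y, ptrans R' sj (Sf j) y) ->
  exists t, pinst (child_run R' ss) (aut_rhs Sf a n) t.
Proof.
move=> hs H.
have [ys [hy Hy]] : exists ys, size ys = n /\ forall j y,
    List.nth_error ys j = Some y -> child_run R' ss (Sf j) j y.
  apply: seq_from_nth => j; rewrite -hs => /nth_error_defined [sj hsj].
  by have [y hy] := H j sj hsj; exists y, sj.
by exists (Node a ys); apply/pinst_aut_rhsP; exists ys.
Qed.

Section DomainAutomaton.
Context {Q : finType} {A D : Type} (rk : A -> nat) (R : ruleset Q A D).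
Local Notation DA := (dom_aut_rule rk R).

(* [dom_aut_rule rk R S a xi] unfolds to
   [exists Sf, xi = aut_rhs Sf a (rk a) /\ dom_aut_choice S a Sf]. *)
Definition dom_aut_choice (S : {set Q}) (a : A) (Sf : nat -> {set Q}) : Prop :=
  (S = set0 /\ forall i, i < rk a -> Sf i = set0) \/
  (S != set0 /\
   exists G : Q -> rhs D Q -> Prop,
     (forall q, q \in S -> (exists xi, G q xi) /\ (forall xi, G q xi -> R q a xi)) /\
     (forall i, i < rk a -> forall q',
         q' \in Sf i <-> exists q, q \in S /\ exists xi, G q xi /\ List.In (q', i) (calls xi))).

Lemma dom_aut_wf S a xi : DA S a xi -> wf_rhs rk (rk a) xi.
Proof. by move=> [Sf [-> _]]; exact: wf_aut_rhs. Qed.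

Lemma dom_aut_choice_sound {rkD : D -> nat}
    (wfR : forall q a xi, R q a xi -> wf_rhs rkD (rk a) xi) {S : {set Q}} {a Sf ts} :
  dom_aut_choice S a Sf ->
  (forall j q, j < rk a -> q \in Sf j ->
     exists2 tj, List.nth_error ts j = Some tj & exists u, ptrans R tj q u) ->
  forall q, q \in S -> exists u, ptrans R (Node a ts) q u.
Proof.
move=> [[S0 _]|[_ [G [HG HS]]]] Hts q hq; first by rewrite S0 inE in hq.
have [[xi hG] /(_ xi hG) hR] := HG q hq.
have [u hu] : exists u, pinst (child_run R ts) xi u.
  apply: pinst_exists; first exact: wf_rhs_leafy (wfR _ _ _ hR).
  move=> q' i hc; have hi := wf_rhs_call_lt (wfR _ _ _ hR) hc.
  have hq' : q' \in Sf i by apply/(HS i hi); exists q; split => //; exists xi.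
  by have [ti hti [u hu]] := Hts i q' hi hq'; exists u, ti.
by exists u; apply/ptrans_node; exists xi.
Qed.

Definition child_states (S : {set Q}) (a : A) (ts : seq (tree A)) (j : nat) : {set Q} :=
  [set q' | `[< exists q, q \in S /\ exists xi, (R q a xi /\ exists u, pinst (child_run R ts) xi u)
                                              /\ List.In (q', j) (calls xi) >]].

Lemma child_statesP (S : {set Q}) a ts j q' :
  reflect (exists q, q \in S /\ exists xi, (R q a xi /\ exists u, pinst (child_run R ts) xi u)
                                        /\ List.In (q', j) (calls xi))
          (q' \in child_states S a ts j).
Proof. by rewrite inE; apply: asboolP. Qed.

Lemma child_states_choice (S : {set Q}) a ts :
  (forall q, q \in S -> exists u, ptrans R (Node a ts) q u) ->
  dom_aut_choice S a (child_states S a ts).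
Proof.
move=> HS; case: (boolP (S == set0)) => [/eqP S0|nS0].
- left; split => // i _; apply/setP => q'; rewrite in_set0.
  by apply/negbTE/negP => /child_statesP [q []]; rewrite S0 inE.
- right; split => //; exists (fun q xi => R q a xi /\ exists u, pinst (child_run R ts) xi u).
  split; last by move=> i _ q'; split => /child_statesP.
  move=> q hq; split; last by move=> xi [].
  have [u /ptrans_node [xi h1 h2]] := HS q hq.
  by exists xi; split => //; exists u.
Qed.

Lemma child_states_dom {S : {set Q}} {a ts j tj q'} :
  List.nth_error ts j = Some tj -> q' \in child_states S a ts j -> exists u, ptrans R tj q' u.
Proof.
move=> hj /child_statesP [q [_ [xi [[_ [u hu]] hc]]]].
have [t' [si hsi ht']] := pinst_call_inv hu hc.
by exists t'; move: hsi; rewrite hj => -[->].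
Qed.

Lemma dom_aut_sound (rkD : D -> nat) :
  (forall q a xi, R q a xi -> wf_rhs rkD (rk a) xi) ->
  forall s S t, ptrans DA s S t -> forall q, q \in S -> exists u, ptrans R s q u.
Proof.
move=> wfR s; elim/tree_ind_in: s => a ss IH S t /ptrans_node [xi [Sf [-> Hc]] hp].
move/pinst_aut_rhsP: hp => [ts _ [hs Hts]].
apply: (dom_aut_choice_sound wfR Hc) => j q hj hq.
have [tj /Hts [sj hsj hd]] : exists tj, List.nth_error ts j = Some tj.
  by apply: nth_error_defined; rewrite hs.
by exists sj => //; exact: IH sj (List.nth_error_In _ _ hsj) _ _ hd q hq.
Qed.

Lemma dom_aut_complete s : ranked rk s ->
  forall S : {set Q}, (forall q, q \in S -> exists u, ptrans R s q u) ->
  exists t, ptrans DA s S t.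
Proof.
elim/tree_ind_in: s => a ss IH /= /andP[/eqP hsz /allP_In hall] S HS.
have [t ht] := pinst_aut_rhs_exists DA (child_states S a ss) a ss (rk a) hsz
  (fun j sj hj => IH sj (List.nth_error_In _ _ hj) (hall _ (List.nth_error_In _ _ hj)) _
                     (fun q => child_states_dom hj)).
exists t; apply/ptrans_node; exists (aut_rhs (child_states S a ss) a (rk a)) => //.
by exists (child_states S a ss); split => //; exact: child_states_choice.
Qed.

End DomainAutomaton.

(** * The product construction, hat T1 and M *)

Definition val_lab {D Y} (Pr : pred Y) (l : D + ({y | Pr y} * nat)) : D + (Y * nat) :=
  match l with inl d => inl d | inr (m, i) => inr (val m, i) end.

Lemma pinst_val_lab_inv {D Y} (Pr : pred Y) (P : Y -> nat -> tree D -> Prop) (h : rhs D Y) u :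
  (forall y i u', P y i u' -> Pr y) -> pinst P h u ->
  exists g : rhs D {y | Pr y}, tmap (val_lab Pr) g = h /\ pinst (fun m i u' => P (val m) i u') g u.
Proof.
move=> HP; elim/tree_ind_in: h u => -[d|[y i]] hs IH u /pinst_inv.
- move=> [us -> F].
  have F' : List.Forall2 (fun h u => exists2 g, h = tmap (val_lab Pr) g &
              pinst (fun m i u' => P (val m) i u') g u) hs us.
    by move: F; apply: Forall2_impl_In => x y' hx /(IH x hx) [g [<- hg]]; exists g.
  have [gs [F1 F2]] := Forall2_decompose F'.
  exists (Node (inl d) gs); split; first by rewrite /= (Forall2_eq_map F1).
  by constructor.
- move=> [-> hq]; exists (Node (inr (exist _ y (HP _ _ _ hq), i)) [::]); split => //.
  by constructor.
Qed.

Lemma pinst_val_lab {D Y} (Pr : pred Y) (P : {y | Pr y} -> nat -> tree D -> Prop) g u :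
  pinst P g u -> pinst (fun y i u' => exists2 m, val m = y & P m i u') (tmap (val_lab Pr) g) u.
Proof.
elim/tree_ind_in: g u => -[d|[m i]] gs IH u /pinst_inv.
- move=> [us -> F] /=; constructor; apply/Forall2_map_l.
  by move: F; apply: Forall2_impl_In => x y hx; exact: IH.
- by move=> [-> h] /=; constructor; exists m.
Qed.

Lemma ptrans_of_translated_rhs {Q D O X : Type} {R : ruleset Q D O} {z : rhs D X}
  {Pz : X -> nat -> tree D -> Prop} {t p g u} {P : X * Q -> nat -> tree O -> Prop} :
  pinst Pz z t -> trans R z p g -> pinst P (tmap (@prod_lab X Q O) g) u ->
  (forall x i t' p' u', Pz x i t' -> P (x, p') i u' -> ptrans R t' p' u') -> ptrans R t p u.
Proof.
elim/tree_ind_in: z t p g u => -[d|[x i]] zs IH t p g u /pinst_inv.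
- move=> [ts -> Fz] /= [xi hR hi] hq Hc.
  have hsplit := pinst_tmap_split (@prod_lab X Q O) (fun _ => erefl) _ _ _ _ _ hi hq.
  apply/ptrans_node; exists xi => //; move: hsplit.
  apply: pinst_mono => q' j u' [g' [f]].
  rewrite nth_error_map; case E: (List.nth_error zs j) => [zj|] //= [<-] hg hq'.
  have [tj htj hpj] := Forall2_nth_l Fz E.
  by exists tj => //; exact: IH zj (List.nth_error_In _ _ E) tj q' g' u' hpj hg hq' Hc.
- by move=> [-> h] /= -> /= /pinst_inv [_ hq] Hc; exact: Hc h hq.
Qed.

Lemma calls_translated {Q D O Y} {R : ruleset Q D O} {z : rhs D Y} {p g w j} :
  trans R z p g -> List.In (w, j) (calls (tmap (@prod_lab Y Q O) g)) -> List.In (w.1, j) (calls z).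
Proof.
have hf (l : Q * (Y * nat)) : @prod_lab Y Q O (inr l) = inr ((l.2.1, l.1), l.2.2) by case: l => ? [].
move=> hg; rewrite !calls_leaves (leaves_tmap _ id _ (fun _ => erefl) hf).
by move=> /In_map [[r' [y' j']] hin [-> ->]] /=; exact: trans_leaves hg hin.
Qed.

Lemma relab_inv {A L} {Dm : L -> tree A -> Prop} {a ss s'} : relab Dm (Node a ss) s' ->
  exists ls ss', [/\ s' = Node (a, ls) ss', List.Forall2 Dm ls ss & List.Forall2 (relab Dm) ss ss'].
Proof. by move=> h; inversion h; subst; exists ls, ss'. Qed.

Section Composition.
Context {Q1 Q2 : finType} {Sig Del Om : Type}
  {rkS : Sig -> nat} {rkD : Del -> nat} {rkO : Om -> nat}
  {T1 : tdtt Q1 Sig Del} {T2 : tdtt Q2 Del Om}.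
Hypothesis wf1 : wf_tdtt rkS rkD T1.
Hypothesis wf2 : wf_tdtt rkD rkO T2.

Local Notation X := (Q1 * {set Q2})%type.
Local Notation R1 := (rules_of T1).
Local Notation R2 := (rules_of T2).
Local Notation DA := (dom_aut_rule rkD (rules_of T2)).
Local Notation hT := (hatT1_rules rkD T1 T2).
Local Notation plz := (@prod_lab Q1 {set Q2} Del).
Local Notation plg := (@prod_lab X Q2 Om).

Definition dom2 (p : Q2) (t : tree Del) := exists u, ptrans R2 t p u.

Lemma wf_rhs_annotate {k} {xi : rhs Del Q1} {S zeta} :
  wf_rhs rkD k xi -> trans DA xi S zeta -> wf_rhs rkD k (tmap plz zeta).
Proof.
elim/tree_ind_in: xi S zeta => -[d|[q i]] xs IH S zeta /=; last by case/andP => hs hi -> /=.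
case/andP => /eqP hs /allP_In hall [xi [Sf [-> _]]] /inst_aut_rhsP [ts -> [hts Hts]] /=.
rewrite size_map hts eqxx /=; apply/allP_In => y /In_map [t ht ->].
have [j hj] := List.In_nth_error _ _ ht; have [f] := Hts j t hj.
rewrite nth_error_map; case E: (List.nth_error xs j) => [x|] //= [<-] htr.
have hx := List.nth_error_In _ _ E; exact: IH x hx (Sf j) t (hall x hx) htr.
Qed.

Lemma hatT1_rule_wf {x a z} : hT x a z -> wf_rhs rkD (rkS a) z.
Proof. by move=> [xi h1 [zeta h2 ->]]; exact: wf_rhs_annotate (wf1 _ _ _ h1) h2. Qed.

Lemma annotation_sound {k} {xi : rhs Del Q1} {S zeta} {P : X -> nat -> tree Del -> Prop} {t} :
  wf_rhs rkD k xi -> trans DA xi S zeta -> pinst P (tmap plz zeta) t ->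
  (forall x i t', P x i t' -> forall p, p \in x.2 -> dom2 p t') ->
  pinst (fun q i t' => exists S', P (q, S') i t') xi t /\ forall p, p \in S -> dom2 p t.
Proof.
elim/tree_ind_in: xi S zeta t => -[d|[q i]] xs IH S zeta t /=; last first.
  case/andP => /eqP/size0nil -> _ -> /= /pinst_inv [_ h] HP.
  by split; [constructor; exists S | move=> p; exact: HP _ _ _ h p].
case/andP => /eqP hs /allP_In hall [xi [Sf [-> Hc]]] /inst_aut_rhsP [zs -> [hzs Hzs]] /=.
move=> /pinst_inv [ts -> /Forall2_map_l F] HP.
have hts : size ts = rkD d by rewrite -(Forall2_size F).
have Hj j x t' : List.nth_error xs j = Some x -> List.nth_error ts j = Some t' ->
    pinst (fun q i t' => exists S', P (q, S') i t') x t' /\ forall p, p \in Sf j -> dom2 p t'.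
  move=> hx ht; have [z hz hp] := Forall2_nth_r F ht.
  have [f] := Hzs j z hz; rewrite nth_error_map hx => -[<-] htr.
  have hxin := List.nth_error_In _ _ hx.
  exact: IH x hxin (Sf j) z t' (hall x hxin) htr hp HP.
split.
- constructor; apply/Forall2_nthP; split; first by rewrite hs hts.
  by move=> j x t' hx ht; case: (Hj j x t' hx ht).
- apply: (dom_aut_choice_sound rkD R2 wf2 Hc) => j p hj hp.
  have [x hx] : exists x, List.nth_error xs j = Some x by apply: nth_error_defined; rewrite hs.
  have [t' ht'] : exists t', List.nth_error ts j = Some t' by apply: nth_error_defined; rewrite hts.
  by exists t' => //; case: (Hj j x t' hx ht') => _; apply.
Qed.

Lemma hatT1_sound {s q S t} :
  ptrans hT s (q, S) t -> ptrans R1 s q t /\ forall p, p \in S -> dom2 p t.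
Proof.
elim/tree_ind_in: s q S t => a ss IH q S t /ptrans_node [z [xi h1 [zeta h2 ->]] hp].
have HP x i t' : child_run hT ss x i t' -> forall p, p \in x.2 -> dom2 p t'.
  by case: x => q' S' [si hsi ht]; exact: (IH si (List.nth_error_In _ _ hsi) q' S' t' ht).2.
have [hp1 hd] := annotation_sound (wf1 _ _ _ h1) h2 hp HP.
split => //; apply/ptrans_node; exists xi => //.
move: hp1; apply: pinst_mono => q' i t' [S' [si hsi ht]]; exists si => //.
exact: (IH si (List.nth_error_In _ _ hsi) q' S' t' ht).1.
Qed.

Lemma hatT1_dom {s x t} : ptrans hT s x t -> forall p, p \in x.2 -> dom2 p t.
Proof. by case: x => q S /hatT1_sound []. Qed.

Definition comp_call (P1 : Q1 -> nat -> tree Del -> Prop) (y : X * Q2) (i : nat) (u : tree Om) :=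
  y.2 \in y.1.2 /\
  exists t, [/\ P1 y.1.1 i t, forall p, p \in y.1.2 -> dom2 p t & ptrans R2 t y.2 u].

(* [tmap plz zeta] is the right-hand side of hat T1 obtained by translating [xi]
   with the domain-automaton state [S]. *)
Definition annotation (P1 : Q1 -> nat -> tree Del -> Prop) (xi : rhs Del Q1) (S : {set Q2})
    (t : tree Del) (zeta : tree (Del + ({set Q2} * (Q1 * nat)))) :=
  [/\ trans DA xi S zeta,
      pinst (fun (x : X) i t' => P1 x.1 i t' /\ forall p, p \in x.2 -> dom2 p t') (tmap plz zeta) t &
      forall p, p \in S -> forall u, ptrans R2 t p u ->
        exists g, trans R2 (tmap plz zeta) p g /\ pinst (comp_call P1) (tmap plg g) u].

Lemma annotation_node P1 d xs ts zs (S : {set Q2}) :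
  size xs = rkD d -> List.Forall2 (pinst P1) xs ts -> size zs = size xs ->
  (forall j x z t', List.nth_error xs j = Some x -> List.nth_error zs j = Some z ->
     List.nth_error ts j = Some t' -> annotation P1 x (child_states R2 S d ts j) t' z) ->
  (forall p, p \in S -> dom2 p (Node d ts)) ->
  annotation P1 (Node (inl d) xs) S (Node d ts) (Node (inl d) zs).
Proof.
move=> hs F hzs Hz HS; set Sf := child_states R2 S d ts.
have hts : size ts = rkD d by rewrite -(Forall2_size F).
have Hxt j z : List.nth_error zs j = Some z ->
    exists x t', List.nth_error xs j = Some x /\ List.nth_error ts j = Some t'.
  move=> /nth_error_size hj; have := hj; rewrite hzs => /nth_error_defined [x hx].
  by move: hj; rewrite hzs hs -hts => /nth_error_defined [t' ht']; exists x, t'.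
split.
- exists (aut_rhs Sf d (rkD d)); first by exists Sf; split => //; exact: child_states_choice.
  apply/inst_aut_rhsP; exists zs => //; split; first by rewrite hzs hs.
  move=> j z hz; have [x [t' [hx ht']]] := Hxt j z hz.
  by exists (trans DA x); [rewrite nth_error_map hx | case: (Hz j x z t' hx hz ht')].
- constructor; apply/Forall2_map_l/Forall2_nthP; split; first by rewrite hzs hs hts.
  move=> j z t' hz ht'; have [x [_ [hx _]]] := Hxt j z hz.
  by case: (Hz j x z t' hx hz ht').
- move=> p hp u /ptrans_node [xi hR hu].
  have H : pinst (fun q' i u' => exists2 g',
      (exists2 f, List.nth_error (map (trans R2) (map (tmap plz) zs)) i = Some f & f q' g') &
      pinst (comp_call P1) (tmap plg g') u') xi u.
    move: (hu); apply: pinst_mono_calls => q' i u' hc [t' ht' hu'].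
    have hq' : q' \in Sf i.
      by apply/(child_statesP R2); exists p; split => //; exists xi; split => //; split => //; exists u.
    have [z hz] : exists z, List.nth_error zs i = Some z.
      by apply: nth_error_defined; rewrite hzs hs -hts; exact: nth_error_size ht'.
    have [x [_ [hx _]]] := Hxt i z hz.
    have [_ _ /(_ q' hq' u' hu') [g [hg1 hg2]]] := Hz i x z t' hx hz ht'.
    by exists g => //; exists (trans R2 (tmap plz z)) => //; rewrite !nth_error_map hz.
  have [g [hg1 hg2]] := pinst_tmap_merge plg (fun _ => erefl) _ _ _ _ H.
  by exists g; split => //; exists xi.
Qed.

Lemma annotation_exists {k P1} {xi : rhs Del Q1} {t} {S : {set Q2}} :
  wf_rhs rkD k xi -> pinst P1 xi t -> (forall p, p \in S -> dom2 p t) ->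
  exists zeta, annotation P1 xi S t zeta.
Proof.
elim/tree_ind_in: xi t S => -[d|[q i]] xs IH t S /=; last first.
  case/andP => /eqP/size0nil -> _ /pinst_inv [_ h] HS.
  exists (Node (inr (S, (q, i))) [::]); split => //=; first by constructor; split.
  move=> p hp u hu; exists (Node (inr (p, ((q, S), i))) [::]); split => //=.
  by constructor; split => //; exists t.
case/andP => /eqP hs /allP_In hall /pinst_inv [ts -> F] HS.
pose Ann j x z := forall t', List.nth_error ts j = Some t' ->
  annotation P1 x (child_states R2 S d ts j) t' z.
have Hann j x : List.nth_error xs j = Some x -> exists z, Ann j x z.
  move=> hx; have [t' ht' hp] := Forall2_nth_l F hx.
  have hxin := List.nth_error_In _ _ hx.
  have [z hz] := IH x hxin t' (child_states R2 S d ts j) (hall x hxin) hp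
    (fun p => child_states_dom R2 ht').
  by exists z => t''; rewrite ht' => -[<-].
have [zs [hzs Hzs]] := seq_from_nth_error Ann xs Hann.
by exists (Node (inl d) zs); apply: annotation_node => // j x z t' hx hz; apply: Hzs.
Qed.

Lemma hatT1_complete s q (S : {set Q2}) t :
  ptrans R1 s q t -> (forall p, p \in S -> dom2 p t) -> ptrans hT s (q, S) t.
Proof.
elim/tree_ind_in: s q S t => a ss IH q S t /ptrans_node [xi h1 hp] HS.
have [zeta [h2 h3 _]] := annotation_exists (wf1 _ _ _ h1) hp HS.
apply/ptrans_node; exists (tmap plz zeta); first by exists xi => //; exists zeta.
move: h3; apply: pinst_mono => -[q' S'] i t' [[si hsi ht] hd]; exists si => //.
exact: IH si (List.nth_error_In _ _ hsi) q' S' t' ht hd.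
Qed.

Local Notation MS := (Mstate Q1 Q2).
Local Notation MR := (M_rules rkS rkD T1 T2).
Local Notation DmM := (tdom rkS rkS (Mla rkS rkD T1 T2)).

Definition la_label (s : tree Sig) : {set X} := [set x | `[< exists t, ptrans hT s x t >]].

Fixpoint la_relabel (s : tree Sig) : tree (Sig * seq {set X}) :=
  match s with Node a ss => Node (a, map la_label ss) (map la_relabel ss) end.

Lemma relab_la_relabel s : ranked rkS s -> relab DmM s (la_relabel s).
Proof.
elim/tree_ind_in: s => a ss IH /= /andP[_ /allP_In hall]; constructor.
- apply/Forall2_map_l/Forall2_refl_In => si hsi; split; first exact: hall.
  have [t ht] := dom_aut_complete rkS hT si (hall _ hsi) (la_label si)
    (fun x => ltac:(by rewrite inE => /asboolP)).
  exists t; split => //.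
  exact: ptrans_ranked (fun q a xi h => dom_aut_wf rkS hT q a xi h) si _ t ht.
- by apply/Forall2_map_r/Forall2_refl_In => si hsi; exact: IH si hsi (hall _ hsi).
Qed.

Lemma M_run_of_comp s : ranked rkS s -> forall q (S : {set Q2}) p (hp : p \in S) t u,
  ptrans R1 s q t -> (forall p, p \in S -> dom2 p t) -> ptrans R2 t p u ->
  ptrans MR (la_relabel s) (exist _ (q, S, p) hp) u.
Proof.
elim/tree_ind_in: s => a ss IH /= /andP[/eqP hsz /allP_In hall] q S p hp t u.
move=> /ptrans_node [xi h1 hp1] HS hu.
have [zeta [h2 h3 /(_ p hp u hu) [g [hg1 hg2]]]] := annotation_exists (wf1 _ _ _ h1) hp1 HS.
have [gm [hgm1 hgm2]] := pinst_val_lab_inv (fun y : X * Q2 => y.2 \in y.1.2) _ _ _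
  (fun y i u' (h : comp_call _ y i u') => h.1) hg2.
apply/ptrans_node; exists gm.
- exists (tmap plz zeta); first by exists xi => //; exists zeta.
  split; first by exists g => //; rewrite -hgm1; apply: tmap_ext => -[o|[m i]].
  split; first by rewrite /= size_map.
  move=> i hi [q'' S''] hc /=.
  have [t' [[si hsi h1'] hd]] := pinst_call_inv h3 hc.
  rewrite (nth_error_nth (x := la_label si)); last by rewrite nth_error_map hsi.
  by rewrite inE; apply/asboolP; exists t'; exact: hatT1_complete h1' hd.
- move: hgm2; apply: pinst_mono => -[[[q'' S''] p'] hm] i u' [_ [t' [[si hsi ht'] hd hu']]].
  exists (la_relabel si); first by rewrite nth_error_map hsi.
  have hin := List.nth_error_In _ _ hsi.
  exact: IH si hin (hall _ hin) q'' S'' p' hm t' u' ht' hd hu'.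
Qed.

Lemma la_calls_dom {a ss ls z} :
  List.Forall2 DmM ls ss -> size ls = rkS a -> wf_rhs rkD (rkS a) z ->
  (forall i, i < rkS a -> forall y, List.In (y, i) (calls z) -> y \in nth set0 ls i) ->
  forall y j, List.In (y, j) (calls z) ->
    exists2 sj, List.nth_error ss j = Some sj & exists t, ptrans hT sj y t.
Proof.
move=> Fl hsz hwz hla y j hc; have hj := wf_rhs_call_lt hwz hc.
have [l hl] : exists l, List.nth_error ls j = Some l by apply: nth_error_defined; rewrite hsz.
have hy : y \in l by rewrite -(nth_error_nth set0 hl); exact: hla j hj y hc.
have [sj hsj [_ [t [_ ht]]]] := Forall2_nth_l Fl hl.
by exists sj => //; exact: dom_aut_sound (fun _ _ _ h => hatT1_rule_wf h) sj l t ht y hy.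
Qed.

Lemma calls_M_rhs {g : rhs Om MS} {gam} : tmap (@Mlab Q1 Q2 Om) g = tmap plg gam ->
  forall w i, List.In (w, i) (calls (tmap plg gam)) -> w.2 \in w.1.2.
Proof.
have hf (l : MS * nat) : @Mlab Q1 Q2 Om (inr l) = inr (val l.1, l.2) by case: l.
move=> <- w i; rewrite calls_leaves (leaves_tmap _ id _ (fun _ => erefl) hf).
by move=> /In_map [[m j] _ [-> _]]; exact: (valP m).
Qed.

Definition locally_functional (x : X) (p : Q2) (s : tree Sig) := forall t1 t2 u1 u2,
  ptrans hT s x t1 -> ptrans R2 t1 p u1 -> ptrans hT s x t2 -> ptrans R2 t2 p u2 -> u1 = u2.

Section Graft.
Context {a : Sig} {ss : seq (tree Sig)} {x : X} {p : Q2} {z : rhs Del X}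
  {gam : tree (Om + (Q2 * (X * nat)))}.
Hypotheses (hz : hT x a z) (hgam : trans R2 z p gam).
Hypothesis z_calls_dom : forall y j, List.In (y, j) (calls z) ->
  exists2 sj, List.nth_error ss j = Some sj & exists t, ptrans hT sj y t.
Hypothesis gam_calls_valid : forall w i, List.In (w, i) (calls (tmap plg gam)) -> w.2 \in w.1.2.

Lemma graft_run {y r j sj tk uk} :
  List.nth_error ss j = Some sj -> ptrans hT sj y tk -> ptrans R2 tk r uk ->
  exists T U, [/\ ptrans hT (Node a ss) x T, ptrans R2 T p U &
    pinst (fun w i u' => (w, i) = ((y, r), j) -> u' = uk) (tmap plg gam) U].
Proof.
move=> hsj htk huk.
(* The grafted hat T1-run must be a function of the call, so that
   [ptrans_of_translated_rhs] can match it with the calls of T2. *)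
have /choice [F hF] : forall yj : X * nat,
    exists t, List.In yj (calls z) -> child_run hT ss yj.1 yj.2 t.
  move=> [y' j']; case: (pselect (List.In (y', j') (calls z))) => [/z_calls_dom|nin].
    by move=> [sj' hsj' [t ht]]; exists t => _; exists sj'.
  by exists tk => /nin.
pose fk y' j' := if (y', j') == (y, j) then tk else F (y', j').
have fk_run y' j' : List.In (y', j') (calls z) -> child_run hT ss y' j' (fk y' j').
  by rewrite /fk; case: eqP => [[-> ->] _|_ /hF //]; exists sj.
have [T hT'] : exists T, pinst (fun y' j' t' => t' = fk y' j') z T.
  by apply: pinst_exists (wf_rhs_leafy (hatT1_rule_wf hz)) _ => y' j' _; exists (fk y' j').
pose Pk (w : X * Q2) i u' := ((w, i) = ((y, r), j) -> u' = uk) /\ ptrans R2 (fk w.1 i) w.2 u'.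
have [U hU] : exists U, pinst Pk (tmap plg gam) U.
  apply: pinst_exists => [|w i hc].
    have hf (l : Q2 * (X * nat)) : plg (inr l) = inr ((l.2.1, l.1), l.2.2) by case: l => ? [].
    by rewrite (leafy_tmap _ id _ (fun _ => erefl) hf); exact: trans_leafy hgam.
  case: (eqVneq (w, i) ((y, r), j)) => [[-> ->]|ne].
    by exists uk; split => //=; rewrite /fk eqxx.
  have [sj' _ ht'] := fk_run w.1 i (calls_translated hgam hc).
  have [u' hu'] := hatT1_dom ht' w.2 (gam_calls_valid _ _ hc).
  by exists u'; split => // e; rewrite e eqxx in ne.
exists T, U; split.
- apply/ptrans_node; exists z => //.
  by move: hT'; apply: pinst_mono_calls => y' j' t' hc ->; exact: fk_run.
- by apply: (ptrans_of_translated_rhs hT' hgam hU) => y' i t' p' u' -> [].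
- by move: hU; apply: pinst_mono => w i u' [].
Qed.

Lemma locally_functional_call {y r j sj} :
  locally_functional x p (Node a ss) -> List.In ((y, r), j) (calls (tmap plg gam)) ->
  List.nth_error ss j = Some sj -> locally_functional y r sj.
Proof.
move=> HG hc hsj t1 t2 u1 u2 h1 h1' h2 h2'.
have [TT1 [UU1 [hT1 hU1 hq1]]] := graft_run hsj h1 h1'.
have [TT2 [UU2 [hT2 hU2 hq2]]] := graft_run hsj h2 h2'.
rewrite -(HG _ _ _ _ hT1 hU1 hT2 hU2) in hq2.
have [w [e1 e2]] := pinst_call_inv (pinst_and hq1 hq2) hc.
by rewrite -(e1 erefl) -(e2 erefl).
Qed.

End Graft.

Lemma comp_of_M_run {s s'} {m : MS} {u} : relab DmM s s' -> ptrans MR s' m u ->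
  locally_functional (val m).1 (val m).2 s ->
  exists2 t, ptrans hT s (val m).1 t & ptrans R2 t (val m).2 u.
Proof.
elim/tree_ind_in: s s' m u => a ss IH s' [[x p] hpS] u /relab_inv [ls [ss' [-> Fl Fs]]].
move=> /ptrans_node [g [z hz [[gam hgam hgz] [hsz hla]]] hpg] HG.
move: hz hgam hla hsz HG => /= hz hgam hla hsz HG.
have hwz := hatT1_rule_wf hz.
have LA := la_calls_dom Fl hsz hwz hla.
have Hms := calls_M_rhs hgz.
pose Qm (w : X * Q2) i u' := exists (m : MS) sj sj', [/\ val m = w, List.nth_error ss i = Some sj,
  List.nth_error ss' i = Some sj' /\ relab DmM sj sj', locally_functional w.1 w.2 sj &
  ptrans MR sj' m u'].
have hQm : pinst Qm (tmap plg gam) u.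
  have := pinst_val_lab (fun w : X * Q2 => w.2 \in w.1.2) _ _ _ hpg.
  rewrite (_ : tmap _ g = tmap plg gam); last by rewrite -hgz; apply: tmap_ext => -[o|[m i]].
  apply: pinst_mono_calls => -[y r] i u' hc [m hm [sj' hsj' hrun]].
  have [sj hsj hrel] := Forall2_nth_r Fs hsj'.
  by exists m, sj, sj'; split => //; exact: (locally_functional_call hz hgam LA Hms HG hc hsj).
have [T hT'] : exists T, pinst (child_run hT ss) z T.
  apply: pinst_exists (wf_rhs_leafy hwz) _ => y j hc.
  by have [sj hsj [t ht]] := LA y j hc; exists t, sj.
exists T; first by apply/ptrans_node; exists z.
(* [T] need not use the subtree runs given by [IH]; local functionality makes
   their T2-outputs agree. *)
apply: (ptrans_of_translated_rhs hT' hgam hQm) => y i t' p' u' [si hsi ht'].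
move=> [[w' hw'] [sj [sj' [/= hm]]]]; subst w'; rewrite hsi => -[<-] [hsj' hrel] hG hrun.
have [t'' h1 h2] := IH si (List.nth_error_In _ _ hsi) sj' (exist _ (y, p') hw') u' hrel hrun hG.
have [u'' hu''] := hatT1_dom ht' p' hw'.
by rewrite (hG t'' t' u' u'' h1 h2 ht' hu'').
Qed.

Lemma comp_sub_M {s u} :
  rcomp (hatT1_rel rkS rkD T1 T2) (trel rkD rkO R2 (tt_init T2)) s u ->
  M_rel rkS rkD rkO T1 T2 s u.
Proof.
move=> [t [[hs [ht h1]] [_ [hu h2]]]].
have [h1' hd] := hatT1_sound h1.
split => //; split => //; exists (la_relabel s); split; first exact: relab_la_relabel.
exact: M_run_of_comp hs _ _ _ (set11 (tt_init T2)) t u h1' hd h2.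
Qed.

Lemma M_sub_comp {s u} :
  functional (rcomp (hatT1_rel rkS rkD T1 T2) (trel rkD rkO R2 (tt_init T2))) ->
  M_rel rkS rkD rkO T1 T2 s u ->
  rcomp (hatT1_rel rkS rkD T1 T2) (trel rkD rkO R2 (tt_init T2)) s u.
Proof.
move=> Hf [hs [hu [s' [hr hm]]]].
have hrk t : ptrans hT s (hatT1_init T1 T2) t -> ranked rkD t.
  exact: ptrans_ranked (fun _ _ _ h => hatT1_rule_wf h) s _ t.
have hrk2 t p u' : ptrans R2 t p u' -> ranked rkO u' by exact: ptrans_ranked wf2 t p u'.
have HG : locally_functional (hatT1_init T1 T2) (tt_init T2) s.
  move=> t1 t2 u1 u2 h1 h1' h2 h2'; apply: (Hf s).
  - by exists t1; split; split; rewrite ?(hrk _ h1) ?(hrk2 _ _ _ h1').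
  - by exists t2; split; split; rewrite ?(hrk _ h2) ?(hrk2 _ _ _ h2').
have [t ht1 ht2] := comp_of_M_run hr hm HG.
by exists t; split; split; rewrite ?(hrk _ ht1).
Qed.

End Composition.

Theorem corollary1 (Q1 Q2 Sig Del Om : finType)
    (rkS : Sig -> nat) (rkD : Del -> nat) (rkO : Om -> nat)
    (T1 : tdtt Q1 Sig Del) (T2 : tdtt Q2 Del Om) :
  wf_tdtt rkS rkD T1 -> wf_tdtt rkD rkO T2 ->
  (functional (rcomp (hatT1_rel rkS rkD T1 T2) (trel rkD rkO (rules_of T2) (tt_init T2)))
   <-> functional (M_rel rkS rkD rkO T1 T2)).
Proof.
move=> wf1 wf2; split => [Hf | HM] s u1 u2 h1 h2.
- exact: Hf s u1 u2 (M_sub_comp wf1 wf2 Hf h1) (M_sub_comp wf1 wf2 Hf h2).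
- exact: HM s u1 u2 (comp_sub_M wf1 wf2 h1) (comp_sub_M wf1 wf2 h2).
Qed.
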